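(* Let $g$ be a principal solution of a system $T$. Then the rank of $g$ equals the cardinality of ${\rm alp}(g)$. Moreover, if $h=\vartheta\circ g$ for a morphism $\vartheta$, then the rank of $h$ is at most the rank of $g$.
   Context: A solution of a system $T$ of word equations is a morphism $h$ from ${\rm alp}(T)^*$ (the unknowns of $T$) to a free monoid with $h(u)=h(v)$ for all $(u,v)\in T$; ${\rm alp}(h)$ is the set of letters occurring in images $h(x)$. For $h:\{x_1,\dots,x_n\}^*\to\{a_1,\dots,a_k\}^*$, $\gamma(h)_i=(|h(x_1)|_{a_i},\dots,|h(x_n)|_{a_i})\in\mathbb Q^n$, and the rank of $h$ is the dimension of the $\mathbb Q$-span of $\gamma(h)_1,\dots,\gamma(h)_k$. A solution $h'$ divides a solution $h$ if $h=\vartheta\circ h'$ with $\vartheta$ non-erasing and defined on ${\rm alp}(h')$; a solution $g$ is principal if whenever $g=\vartheta\circ h'$ for a solution $h'$ and non-erasing $\vartheta$, $\vartheta$ is a renaming of letters. *)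

From HB Require Import structures.
From mathcomp Require Import all_boot all_order all_algebra.
Set Implicit Arguments. Unset Strict Implicit. Unset Printing Implicit Defensive.
Import GRing.Theory Num.Theory.

(* Unknowns are x_1..x_n, modelled as 'I_n; letters of an alphabet
   {a_1..a_k} are modelled as 'I_k.  A morphism from X^* to B^* is given by
   its values on letters, h : X -> seq B, extended to words by [wext]. *)
Definition wext (X B : Type) (h : X -> seq B) (w : seq X) : seq B :=
  flatten (map h w).

Definition system (n : nat) := seq (seq 'I_n * seq 'I_n).

Definition alp_sys_full (n : nat) (T : system n) : Prop :=
  forall x : 'I_n, exists2 uv, uv \in T & (x \in uv.1) || (x \in uv.2).

Definition is_solution (n k : nat) (T : system n) (h : 'I_n -> seq 'I_k) : Prop :=
  forall uv, uv \in T -> wext h uv.1 = wext h uv.2.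

Definition alp (n k : nat) (h : 'I_n -> seq 'I_k) : {set 'I_k} :=
  [set a | [exists x, a \in h x]].

Definition gamma_mx (n k : nat) (h : 'I_n -> seq 'I_k) : 'M[rat]_(k, n) :=
  \matrix_(i < k, j < n) ((count_mem i (h j))%:R : rat).

Definition rank_of (n k : nat) (h : 'I_n -> seq 'I_k) : nat :=
  \rank (gamma_mx h).

Definition nonerasing_on (k m : nat) (S : {set 'I_k}) (t : 'I_k -> seq 'I_m) : Prop :=
  forall a, a \in S -> t a <> [::].

Definition renaming_on (k m : nat) (S : {set 'I_k}) (t : 'I_k -> seq 'I_m) : Prop :=
  (forall a, a \in S -> size (t a) = 1%N) /\ {in S &, injective t}.

Definition principal (n k : nat) (T : system n) (g : 'I_n -> seq 'I_k) : Prop :=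
  is_solution T g /\
  forall (k' : nat) (h' : 'I_n -> seq 'I_k') (t : 'I_k' -> seq 'I_k),
    is_solution T h' ->
    nonerasing_on (alp h') t ->
    (forall x, g x = wext t (h' x)) ->
    renaming_on (alp h') t.

(* Linear dependences among the rows of gamma(g) are exactly the weightings
   w of the letters for which every image g(x) has total weight 0.  Given
   such a w, cut every g(x) at the places where its prefix weight vanishes.
   Because each g(x) has weight 0, the cutting of a concatenation of images
   is the concatenation of their cuttings; so naming the pieces by fresh
   letters turns g into a solution h' with g = t o h', where t spells out
   the pieces.  Principality forces every piece to be a single letter,
   which then has weight 0: w vanishes on alp(g).  Hence the rows of
   gamma(g) indexed by alp(g) are independent, while the others are 0.
   The rank bound for t o g holds because gamma(t o g) = C * gamma(g), with
   C the letter-count matrix of t. *)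

From mathcomp Require Import all_boot all_order all_algebra.
Set Implicit Arguments. Unset Strict Implicit. Unset Printing Implicit Defensive.
Import GRing.Theory Num.Theory.
Local Open Scope ring_scope.

Section ZeroWeightBlocks.

Variables (T : eqType) (R : nmodType) (w : T -> R).

Definition weight (s : seq T) : R := \sum_(a <- s) w a.

Lemma weight_cat s1 s2 : weight (s1 ++ s2) = weight s1 + weight s2.
Proof. exact: big_cat. Qed.

(* [cur] is the pending, not yet closed, block. *)
Fixpoint zero_blocks (cur s : seq T) : seq (seq T) :=
  match s with
  | [::] => if cur is [::] then [::] else [:: cur]
  | a :: s' => if weight (rcons cur a) == 0 then rcons cur a :: zero_blocks [::] s'
               else zero_blocks (rcons cur a) s'
  end.

Lemma flatten_zero_blocks cur s : flatten (zero_blocks cur s) = cur ++ s.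
Proof.
elim: s cur => [|a s IHs] cur /=; first by case: cur => //= b c; rewrite cats0.
by case: ifP => _ /=; rewrite IHs cat_rcons.
Qed.

Lemma zero_blocks_neq_nil cur s b : b \in zero_blocks cur s -> b != [::].
Proof.
elim: s cur => [|a s IHs] cur /=; first by case: cur => // c l; rewrite inE => /eqP ->.
case: ifP => _; last exact: IHs.
by rewrite inE => /orP[/eqP -> | /IHs]; first case: cur.
Qed.

Lemma weight_zero_blocks cur s b :
  weight (cur ++ s) = 0 -> b \in zero_blocks cur s -> weight b = 0.
Proof.
elim: s cur => [|a s IHs] cur /=.
  by rewrite cats0; case: cur => // c l ?; rewrite inE => /eqP ->.
rewrite -cat_rcons; case: ifP => [/eqP w0 | _ ws0]; last exact: IHs.
rewrite weight_cat w0 add0r inE => ws0 /orP[/eqP -> // | ].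
exact: IHs.
Qed.

Lemma zero_blocks_cat cur s1 s2 :
  (weight cur = 0 -> cur = [::]) -> weight (cur ++ s1) = 0 ->
  zero_blocks cur (s1 ++ s2) = zero_blocks cur s1 ++ zero_blocks [::] s2.
Proof.
elim: s1 cur => [|a s1 IHs] cur cur0 /=; first by rewrite cats0 => /cur0 ->.
rewrite -cat_rcons; case: ifP => [/eqP w0 | /eqP w0] ws0.
  by rewrite IHs //= -ws0 weight_cat w0 add0r.
by rewrite IHs.
Qed.

Lemma zero_blocks_flatten ss : (forall u, u \in ss -> weight u = 0) ->
  zero_blocks [::] (flatten ss) = flatten (map (zero_blocks [::]) ss).
Proof.
elim: ss => [|u ss IHss] // ss0; rewrite [flatten _]/= [map _ _]/=.
have ss_w0 v : v \in ss -> weight v = 0 by move=> vss; rewrite ss0 // inE vss orbT.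
by rewrite zero_blocks_cat ?IHss // ss0 ?mem_head.
Qed.

End ZeroWeightBlocks.

Lemma sum_count_mem (T : finType) (R : nmodType) (F : T -> R) (s : seq T) :
  \sum_(a <- s) F a = \sum_a F a *+ count_mem a s.
Proof.
elim: s => [|b s IHs]; first by rewrite big_nil big1.
rewrite big_cons IHs (bigD1 b) //= [in RHS](bigD1 b) //= eqxx mulrSr addrCA -addrA.
by congr (_ + (_ + _)); apply: eq_bigr => a /negbTE ab; rewrite /= eq_sym ab.
Qed.

Section PrincipalRefinement.

Variables (n k : nat) (T : system n) (g : 'I_n -> seq 'I_k).
Variables (R : nmodType) (w : 'I_k -> R).
Hypothesis gw0 : forall x, weight w (g x) = 0.

Let blocks_of x := zero_blocks w [::] (g x).
Let blocks := undup (flatten [seq blocks_of x | x <- enum 'I_n]).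

(* One spare letter, so that [inord] applies; it never occurs in [refinement]. *)
Definition block_code (b : seq 'I_k) : 'I_(size blocks).+1 := inord (index b blocks).
Definition block_word (j : 'I_(size blocks).+1) : seq 'I_k := nth [::] blocks j.
Definition refinement (x : 'I_n) : seq 'I_(size blocks).+1 :=
  map block_code (blocks_of x).

Lemma block_wordK x b : b \in blocks_of x -> block_word (block_code b) = b.
Proof.
have bb : b \in blocks_of x -> b \in blocks.
  move=> bx; rewrite mem_undup; apply/flattenP.
  by exists (blocks_of x); rewrite ?map_f ?mem_enum.
move=> /bb bx; rewrite /block_word /block_code inordK ?nth_index //.
by rewrite ltnS ltnW // index_mem.
Qed.

Lemma refinementK x : wext block_word (refinement x) = g x.
Proof.
rewrite /wext -map_comp.
have -> : map (block_word \o block_code) (blocks_of x) = map id (blocks_of x).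
  by apply/eq_in_map => b; apply: block_wordK.
by rewrite map_id flatten_zero_blocks.
Qed.

Lemma refinement_wext u :
  wext refinement u = map block_code (zero_blocks w [::] (wext g u)).
Proof.
rewrite /wext zero_blocks_flatten; last by move=> v /mapP[x _ ->].
by rewrite map_flatten -!map_comp.
Qed.

Lemma refinement_solution : is_solution T g -> is_solution T refinement.
Proof. by move=> gT uv /gT; rewrite !refinement_wext => ->. Qed.

Lemma block_word_nonerasing : nonerasing_on (alp refinement) block_word.
Proof.
move=> j; rewrite inE => /existsP[x /mapP[b bx ->]].
by rewrite (block_wordK bx); apply/eqP; exact: zero_blocks_neq_nil bx.
Qed.

Lemma principal_weight_alp : principal T g -> forall a, a \in alp g -> w a = 0.
Proof.
move=> [gT gprin] a; rewrite inE => /existsP[x].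
have [single _] := gprin _ _ _ (refinement_solution gT) block_word_nonerasing
  (fun x => esym (refinementK x)).
rewrite -[g x]/([::] ++ g x) -(flatten_zero_blocks w) => /flattenP[b bx ab].
have : size b = 1%N.
  by rewrite -(block_wordK bx) single // inE; apply/existsP; exists x; apply: map_f.
case: b bx ab => [|c []] // bx; rewrite inE => /eqP ->.
by have := weight_zero_blocks (cur := [::]) (gw0 x) bx; rewrite /weight big_seq1.
Qed.

End PrincipalRefinement.

Section ParikhMatrix.

Variables (n k : nat) (g : 'I_n -> seq 'I_k).

Lemma gamma_mulmx_row (v : 'rV[rat]_k) x :
  (v *m gamma_mx g) 0 x = weight (v 0) (g x).
Proof.
rewrite mxE /weight [RHS]sum_count_mem.
by apply: eq_bigr => a _; rewrite !mxE mulr_natr.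
Qed.

Lemma gamma_mx_comp m (t : 'I_k -> seq 'I_m) :
  gamma_mx (fun x => wext t (g x)) = gamma_mx t *m gamma_mx g.
Proof.
apply/matrixP => c x; rewrite !mxE /wext count_flatten sumnE natr_sum !big_map.
by rewrite sum_count_mem; apply: eq_bigr => a _; rewrite !mxE mulr_natr.
Qed.

Lemma gamma_row_notin_alp a : a \notin alp g -> row a (gamma_mx g) = 0.
Proof.
move=> ag; apply/rowP => x; rewrite !mxE (count_memPn _) //.
by apply: contra ag => ax; rewrite inE; apply/existsP; exists x.
Qed.

Definition gamma_alp_mx : 'M[rat]_(#|alp g|, n) := rowsub enum_val (gamma_mx g).

Lemma gamma_alp_mx_eqmx : (gamma_alp_mx == gamma_mx g)%MS.
Proof.
rewrite /gamma_alp_mx rowsub_sub /=; apply/row_subP => a.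
have [ag | /gamma_row_notin_alp -> //] := boolP (a \in alp g); last exact: sub0mx.
by rewrite -(enum_rankK_in ag ag) -row_rowsub row_sub.
Qed.

Lemma principal_gamma_alp_row_free (T : system n) :
  principal T g -> row_free gamma_alp_mx.
Proof.
move=> gprin; rewrite -kermx_eq0; apply/rowV0P => v /sub_kermxP.
rewrite /gamma_alp_mx rowsubE mulmxA; set u := v *m _ => uM0.
have uw x : weight (u 0) (g x) = 0 by rewrite -gamma_mulmx_row uM0 mxE.
have u0 := principal_weight_alp uw gprin.
apply/rowP => j; rewrite [RHS]mxE -(u0 _ (enum_valP j)) mxE (bigD1 j) //=.
rewrite !mxE eqxx mulr1 big1 ?addr0 // => i ij.
by rewrite !mxE (inj_eq enum_val_inj) (negbTE ij) mulr0.
Qed.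

End ParikhMatrix.

Local Close Scope ring_scope.

Theorem lemma2p2 (n k : nat) (T : system n) (g : 'I_n -> seq 'I_k) :
  alp_sys_full T ->
  principal T g ->
  rank_of g = #|alp g| /\
  (forall (m : nat) (t : 'I_k -> seq 'I_m),
     rank_of (fun x => wext t (g x)) <= rank_of g).
Proof.
move=> _ gprin; split; last by move=> m t; rewrite /rank_of gamma_mx_comp mxrankM_maxr.
rewrite /rank_of -(eqmx_rank (gamma_alp_mx_eqmx g)).
exact/eqP/(principal_gamma_alp_row_free gprin).
Qed.
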